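(* Let $V$ be a finite set of nodes and let $C=\{\mathbf{t}^1,\dots,\mathbf{t}^{|C|}\}$ be a finite collection of cascades on $V$, where each cascade $\mathbf{t}^c=(t^c_v)_{v\in V}$ assigns to each node $v$ an infection time $t^c_v\in\mathbb{R}\cup\{\infty\}$ ($t^c_v=\infty$ meaning $v$ is not infected in cascade $c$). For every cascade $c$ and every ordered pair of distinct nodes $(i,j)$ with $t^c_i<t^c_j<\infty$, let $w_c(i,j)=\varepsilon^{-1} f(t^c_j\mid t^c_i;\alpha)\ge 0$, where $f(\cdot\mid\cdot;\alpha)\ge 0$ is a pairwise transmission likelihood and $\varepsilon>0$. For a directed graph $G$ on $V$, identified with its edge set $G\subseteq V\times V$, define $$F(\mathbf{t}^c\mid G)=\sum_{j\in V:\ t^c_j<\infty}\log\Big(1+\sum_{i\in V:\ (i,j)\in G,\ t^c_i<t^c_j} w_c(i,j)\Big),$$ and $F_C(\mathbf{t}^1,\dots,\mathbf{t}^{|C|}\mid G)=\sum_{c} F(\mathbf{t}^c\mid G)$. Then $G\mapsto F_C(\mathbf{t}^1,\dots,\mathbf{t}^{|C|}\mid G)$ is a submodular set function on subsets of $V\times V$, i.e., for all $A\subseteq B\subseteq V\times V$ and every $s\in (V\times V)\setminus B$, $F_C(A\cup\{s\})-F_C(A)\ge F_C(B\cup\{s\})-F_C(B)$.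
   Context: The term $1$ inside the logarithm accounts for an external source node connected to every node by an edge of likelihood $\varepsilon$ (normalized weight $\varepsilon^{-1}\varepsilon=1$), present in every graph including the empty one; thus $F_C$ of the empty graph is $0$. $F_C$ is the improvement in log-likelihood of the observed cascades under $G$ relative to the empty graph, in the model where cascades spread as directed trees over $G$ and the likelihood of a cascade sums, over all spanning trees of the infected nodes supported by $G$, the product of pairwise transmission likelihoods along tree edges. *)

From HB Require Import structures.
From mathcomp Require Import all_boot all_order all_algebra.
From mathcomp Require Import reals exp.
Set Implicit Arguments. Unset Strict Implicit. Unset Printing Implicit Defensive.
Import Order.TTheory GRing.Theory Num.Theory.
Local Open Scope ring_scope.

(* An infection time: [Some t] = infected at time t, [None] = time infinity
   (not infected). A cascade assigns an infection time to every node. *)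
Definition cascade (R : realType) (V : finType) := V -> option R.

Definition before (R : realType) (ti tj : option R) : bool :=
  match ti, tj with
  | Some a, Some b => a < b
  | _, _ => false
  end.

Definition infected (R : realType) (t : option R) : bool :=
  if t is Some _ then true else false.

(* w_c(i,j) = eps^-1 * f(t_j | t_i); f tj ti is the pairwise transmission
   likelihood (alpha fixed and absorbed into f). Only used when t_i < t_j < oo. *)
Definition wgt (R : realType) (V : finType) (f : R -> R -> R) (eps : R)
  (t : cascade R V) (i j : V) : R :=
  match t i, t j with
  | Some ti, Some tj => eps^-1 * f tj ti
  | _, _ => 0
  end.

Definition Fcasc (R : realType) (V : finType) (f : R -> R -> R) (eps : R)
  (t : cascade R V) (G : {set V * V}) : R :=
  \sum_(j : V | infected (t j))
     ln (1 + \sum_(i : V | ((i, j) \in G) && before (t i) (t j)) wgt f eps t i j).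

Definition FC (R : realType) (V : finType) (m : nat) (f : R -> R -> R) (eps : R)
  (casc : 'I_m -> cascade R V) (G : {set V * V}) : R :=
  \sum_(c < m) Fcasc f eps (casc c) G.

(** Every per-node term of F_C is ln(1 + g G), where g G is the total weight
    of the edges of G entering that node: g is nonnegative and modular in G,
    so adding the edge s raises g by the same amount over A and over B, while
    g A <= g B. Since x |-> ln (x + d) - ln x is nonincreasing on x > 0, the
    gain over A dominates the gain over B. Submodularity is preserved by sums,
    over nodes and over cascades. *)
From HB Require Import structures.
From mathcomp Require Import all_boot all_order all_algebra.
From mathcomp Require Import reals exp.
From mathcomp Require Import ring lra.
Import Order.TTheory GRing.Theory Num.Theory.
Local Open Scope ring_scope.

Definition submodular {T : finType} {R : numDomainType} (F : {set T} -> R) :=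
  forall (A B : {set T}) (s : T), A \subset B -> s \notin B ->
    F (s |: B) - F B <= F (s |: A) - F A.

Lemma submodular_sum (T : finType) (R : numDomainType) (I : Type)
    (r : seq I) (P : pred I) (F : I -> {set T} -> R) :
  (forall i, P i -> submodular (F i)) ->
  submodular (fun G => \sum_(i <- r | P i) F i G).
Proof.
move=> subF A B s AB sB; rewrite -!sumrB.
by apply: ler_sum => i Pi; apply: subF.
Qed.

Lemma le_ln_increment (R : realType) (x y d : R) : 0 < x -> x <= y -> 0 <= d ->
  ln (y + d) - ln y <= ln (x + d) - ln x.
Proof.
move=> x_gt0 xy d_ge0.
have y_gt0 : 0 < y by apply: lt_le_trans xy.
have yd_gt0 : 0 < y + d by rewrite ltr_wpDr.
have xd_gt0 : 0 < x + d by rewrite ltr_wpDr.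
suff : ln ((y + d) * x) <= ln ((x + d) * y).
  by rewrite !lnM ?posrE //; lra.
rewrite ler_ln ?posrE ?mulr_gt0 // -subr_ge0.
have -> : (x + d) * y - (y + d) * x = d * (y - x) by ring.
by rewrite mulr_ge0 // subr_ge0.
Qed.

Lemma submodular_ln1p_modular (T : finType) (R : realType) (g : {set T} -> R) :
  (forall G : {set T}, 0 <= g G) ->
  (forall A B : {set T}, A \subset B -> g A <= g B) ->
  (forall (G : {set T}) s, s \notin G -> g (s |: G) = g G + g [set s]) ->
  submodular (fun G => ln (1 + g G)).
Proof.
move=> g_ge0 g_mono g_setU1 A B s AB sB /=.
have sA : s \notin A by apply: contra sB; apply: (subsetP AB).
rewrite !g_setU1 // !addrA.
by apply: le_ln_increment; rewrite ?ltr_pwDl ?lerD2l ?g_mono.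
Qed.

Section InWeight.
Variables (R : realType) (V : finType) (w : V -> V -> R) (P : rel V).
Hypothesis w_ge0 : forall i j, 0 <= w i j.

Definition in_weight (G : {set V * V}) (j : V) : R :=
  \sum_(i : V | ((i, j) \in G) && P i j) w i j.

Lemma in_weight_ge0 (G : {set V * V}) (j : V) : 0 <= in_weight G j.
Proof. by apply: sumr_ge0 => i _; apply: w_ge0. Qed.

Lemma le_in_weight (A B : {set V * V}) (j : V) : A \subset B -> in_weight A j <= in_weight B j.
Proof.
move=> AB; rewrite /in_weight [leLHS]big_mkcond [leRHS]big_mkcond /=.
apply: ler_sum => i _; case: ifP => [/andP[iA Pij] | _].
  by rewrite (subsetP AB _ iA) Pij.
by case: ifP.
Qed.

Lemma in_weight_setU1 (G : {set V * V}) (s : V * V) (j : V) : s \notin G ->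
  in_weight (s |: G) j = in_weight G j + in_weight [set s] j.
Proof.
move=> sG; rewrite /in_weight !(big_mkcond (fun i => _ && _)) -big_split /=.
apply: eq_bigr => i _; rewrite in_setU1 in_set1.
by case: eqP => [-> | _] /=; rewrite ?(negbTE sG) ?add0r ?addr0.
Qed.

Lemma submodular_ln1p_in_weight (j : V) :
  submodular (fun G => ln (1 + in_weight G j)).
Proof.
apply: submodular_ln1p_modular => [G | A B | G s].
- exact: in_weight_ge0.
- exact: le_in_weight.
- exact: in_weight_setU1.
Qed.

End InWeight.

Lemma wgt_ge0 (R : realType) (V : finType) (f : R -> R -> R) (eps : R)
    (t : cascade R V) (i j : V) :
  0 < eps -> (forall a b, 0 <= f a b) -> 0 <= wgt f eps t i j.
Proof.
move=> eps_gt0 f_ge0; rewrite /wgt.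
case: (t i) => [ti|]; case: (t j) => [tj|] //.
by rewrite mulr_ge0 ?f_ge0 // invr_ge0 ltW.
Qed.

Lemma submodular_Fcasc (R : realType) (V : finType) (f : R -> R -> R) (eps : R)
    (t : cascade R V) :
  0 < eps -> (forall a b, 0 <= f a b) -> submodular (Fcasc f eps t).
Proof.
move=> eps_gt0 f_ge0; apply: submodular_sum => j _.
apply: (@submodular_ln1p_in_weight _ _ (wgt f eps t) (fun i j => before (t i) (t j))).
by move=> i k; apply: wgt_ge0.
Qed.

Lemma submodular_FC (R : realType) (V : finType) (m : nat)
    (casc : 'I_m -> cascade R V) (f : R -> R -> R) (eps : R) :
  0 < eps -> (forall a b, 0 <= f a b) -> submodular (FC f eps casc).
Proof.
move=> eps_gt0 f_ge0; apply: submodular_sum => c _.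
exact: submodular_Fcasc.
Qed.

Theorem theorem3 (R : realType) (V : finType) (m : nat)
  (casc : 'I_m -> cascade R V) (f : R -> R -> R) (eps : R)
  (heps : 0 < eps) (hf : forall a b : R, 0 <= f a b)
  (A B : {set V * V}) (s : V * V) :
  A \subset B -> s \notin B ->
  FC f eps casc (s |: A) - FC f eps casc A >=
  FC f eps casc (s |: B) - FC f eps casc B.
Proof. exact: (submodular_FC R V m casc f eps heps hf A B s). Qed.
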